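(* Let $0<q<1$ and let ${\cal H}_n(z|q)=\sum_{k=0}^n\frac{(q;q)_n\,q^{-k/2}z^k}{(q;q)_k(q;q)_{n-k}}$ be the Rogers–Szegő polynomials, with orthonormal versions $\phi_n(z)=\frac{q^{n/2}}{\sqrt{(q;q)_n}}{\cal H}_n(z|q)$ (orthonormal on the unit circle with respect to $w(z)=\frac{(q^{1/2}z,q^{1/2}/z;q)_\infty}{2\pi(q;q)_\infty}$). Then $(D_q\phi_n)(z)=\frac{\sqrt{1-q^n}}{1-q}\phi_{n-1}(z)$ for $n\ge1$, and the $q$-discriminants are $$D(\phi_n,q)=\frac{(-q)^{n(n-1)/2}}{(1-q)^n}(q;q)_n\prod_{j=1}^{n-1}\frac{1}{(q;q)_j},\qquad D({\cal H}_n,q)=(-q)^{-n(n-1)/2}\Big[\frac{(q;q)_n}{1-q}\Big]^n\prod_{j=1}^{n-1}\frac{1}{(q;q)_j}.$$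
   Context: $(a;q)_0=1$, $(a;q)_n=\prod_{k=1}^n(1-aq^{k-1})$ for $n\ge1$ or $n=\infty$, and $(a,b;q)_n=(a;q)_n(b;q)_n$. $(D_qf)(z)=\frac{f(z)-f(qz)}{z-qz}$. For $f(z)=\gamma\prod_{j=1}^n(z-z_j)$, the $q$-discriminant is $D(f,q)=\gamma^{2n-2}q^{n(n-1)/2}\prod_{1\le j<k\le n}(q^{1/2}z_j-q^{-1/2}z_k)(q^{-1/2}z_j-q^{1/2}z_k)$. *)

From HB Require Import structures.
From mathcomp Require Import all_boot all_order all_algebra.
From mathcomp Require Import complex.
Set Implicit Arguments. Unset Strict Implicit. Unset Printing Implicit Defensive.
Import Order.TTheory GRing.Theory Num.Theory.
Local Open Scope ring_scope.
Local Open Scope complex_scope.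

Definition qpoch (R : rcfType) (a q : R) (n : nat) : R :=
  \prod_(i < n) (1 - a * q ^+ i).

Definition rogers_szego (R : rcfType) (n : nat) (q : R) : {poly R[i]} :=
  \sum_(k < n.+1)
    ((qpoch q q n / (qpoch q q k * qpoch q q (n - k)) * (Num.sqrt q) ^- k)%:C
       *: 'X^k).

Definition rs_phi (R : rcfType) (n : nat) (q : R) : {poly R[i]} :=
  ((Num.sqrt q ^+ n / Num.sqrt (qpoch q q n))%:C) *: rogers_szego n q.

Definition qderiv (R : rcfType) (q : R) (f : {poly R[i]}) (z : R[i]) : R[i] :=
  (f.[z] - f.[q%:C * z]) / (z - q%:C * z).

(* q-discriminant given the leading coefficient g and the list of roots zs (with
   multiplicity) of f = g * prod_j (z - z_j):
   g^(2n-2) q^(n(n-1)/2) prod_{j<k} (q^(1/2) z_j - q^(-1/2) z_k)(q^(-1/2) z_j - q^(1/2) z_k) *)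
Definition qdisc_roots (R : rcfType) (g : R[i]) (zs : seq R[i]) (q : R) : R[i] :=
  let n := size zs in
  let s := (Num.sqrt q)%:C in
  g ^ ((2 * n)%:Z - 2) * (q ^+ (n * (n - 1))./2)%:C *
  \prod_(j < n) \prod_(k < n | (j < k)%N)
     ((s * zs`_j - s^-1 * zs`_k) * (s^-1 * zs`_j - s * zs`_k)).

Definition qdisc (R : rcfType) (f : {poly R[i]}) (q : R) : R[i] :=
  qdisc_roots (lead_coef f) (sval (closed_field_poly_normal f)) q.

(* H_n has Gaussian-binomial coefficients, so it satisfies the q-difference equation
   H_n(z) - H_n(qz) = (1 - q^n) q^(-1/2) z H_(n-1)(z) and the recurrence
   H_(n+1)(z) = q^(-1/2) z H_n(z) + H_n(qz); the first gives D_q phi_n at once.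
   Each factor of the q-discriminant equals -q^-1 (q z_j - z_k)(q z_k - z_j), so
   D(f,q) is determined by
   prod_j f(q z_j) = g^n (q-1)^n prod_j z_j prod_(j<>k) (q z_j - z_k).
   At a root of H_n the difference equation turns H_n(q z_j) into a multiple of
   z_j H_(n-1)(z_j), and prod_j H_(n-1)(z_j) is a resultant, computed by induction on n
   from the recurrence and the symmetry of resultants.  Finally phi_n is a scalar
   multiple of H_n with the same roots. *)

From HB Require Import structures.
From mathcomp Require Import all_boot all_order all_algebra.
From mathcomp Require Import complex.
From mathcomp Require Import ring zify.
Set Implicit Arguments. Unset Strict Implicit. Unset Printing Implicit Defensive.
Import Order.TTheory GRing.Theory Num.Theory.
Local Open Scope ring_scope.

Section SplittingPolynomials.
Variable F : fieldType.
Implicit Types (f g : {poly F}) (r t : seq F) (a x : F).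

Definition splits_as f r := f = lead_coef f *: \prod_(z <- r) ('X - z%:P).

Lemma splits_as_scale a f r : a != 0 -> splits_as (a *: f) r -> splits_as f r.
Proof. by move=> a0; rewrite /splits_as lead_coefZ -scalerA => /(scalerI a0). Qed.

Lemma prodrMl_seq r a (G : F -> F) :
  \prod_(z <- r) (a * G z) = a ^+ size r * \prod_(z <- r) G z.
Proof.
by elim: r => [|w r IH]; rewrite ?big_nil ?mulr1 // !big_cons IH exprS; ring.
Qed.

Lemma horner_splits f r x :
  splits_as f r -> f.[x] = lead_coef f * \prod_(z <- r) (x - z).
Proof.
move=> ->; rewrite lead_coefZ lead_coef_prod_XsubC mulr1 hornerZ horner_prod.
by under eq_bigr do rewrite hornerXsubC.
Qed.

Lemma size_splits f r : f != 0 -> splits_as f r -> size r = (size f).-1.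
Proof.
move=> f0 fr; rewrite fr size_scale ?lead_coef_eq0 ?size_prod_XsubC //.
Qed.

Lemma root_splits f r z : splits_as f r -> z \in r -> f.[z] = 0.
Proof. by move=> /horner_splits -> zr; rewrite (big_rem z zr) /= subrr mul0r mulr0. Qed.

Lemma splits_horner0 f r :
  splits_as f r -> f.[0] = lead_coef f * (-1) ^+ size r * \prod_(z <- r) z.
Proof.
move=> /horner_splits ->; rewrite -mulrA -prodrMl_seq; congr (_ * _).
by apply: eq_bigr => z _; rewrite sub0r mulN1r.
Qed.

(* The resultant of [f] and [g], computed from the roots of either one. *)
Lemma prod_horner_splitsC f g r t : splits_as f r -> splits_as g t ->
  lead_coef f ^+ size t * \prod_(z <- r) g.[z]
  = (-1) ^+ (size r * size t) * lead_coef g ^+ size r * \prod_(w <- t) f.[w].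
Proof.
move=> fr gt.
under eq_bigr do rewrite (horner_splits _ gt).
under [in RHS]eq_bigr do rewrite (horner_splits _ fr).
rewrite !prodrMl_seq exchange_big /=.
have swap w : \prod_(z <- r) (z - w) = (-1) ^+ size r * \prod_(z <- r) (w - z).
  by rewrite -prodrMl_seq; apply: eq_bigr => z _; rewrite mulN1r opprB.
under eq_bigr do rewrite swap.
rewrite prodrMl_seq -exprM mulnC; ring.
Qed.
End SplittingPolynomials.

Lemma exprz_double_pred (R : unitRingType) (x : R) n :
  x ^ ((2 * n.+1)%:Z - 2) = x ^+ (2 * n).
Proof. by rewrite mulnS PoszD addrAC subrr add0r -exprnP. Qed.

Section OrderedPairs.
Variable F : comNzRingType.

Lemma prod_pairs_const n (c : F) :
  \prod_(j < n) \prod_(k < n | (j < k)%N) c = c ^+ (n * (n - 1))./2.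
Proof.
elim: n => [|n IH]; first by rewrite big_ord0.
rewrite big_ord_recl /= big_mkcond big_ord_recl /= mul1r.
have -> : \prod_(i < n) (if (0 < lift ord0 i)%N then c else 1) = c ^+ n.
  by rewrite prodr_const card_ord.
under eq_bigr do rewrite big_mkcond big_ord_recl /= mul1r -big_mkcond.
by rewrite IH -exprD !subn1 -!bin2 binS bin1 addnC.
Qed.

Lemma prod_pairs_sym n (G : 'I_n -> 'I_n -> F) :
  \prod_(j < n) \prod_(k < n | (j < k)%N) (G j k * G k j)
  = \prod_(j < n) \prod_(k < n | k != j) G j k.
Proof.
have swap : \prod_(j < n) \prod_(k < n | (j < k)%N) G k j
          = \prod_(j < n) \prod_(k < n | (k < j)%N) G j k.
  rewrite (eq_bigr _ (fun j _ => big_mkcond _ _)) exchange_big /=.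
  by apply: eq_bigr => j _; rewrite [RHS]big_mkcond.
rewrite (eq_bigr _ (fun j _ => big_split _ _ _ _ _)) big_split /= swap -big_split /=.
apply: eq_bigr => j _; rewrite [RHS](bigID (fun k : 'I_n => (j < k)%N)) /=.
by congr (_ * _); apply: eq_bigl => k; rewrite -val_eqE /=; case: ltngtP.
Qed.
End OrderedPairs.

Lemma prod_horner_splits_scale (F : fieldType) (f : {poly F}) r a :
  splits_as f r ->
  \prod_(z <- r) f.[a * z]
  = lead_coef f ^+ size r * (a - 1) ^+ size r * \prod_(z <- r) z
    * \prod_(j < size r) \prod_(k < size r | k != j) (a * r`_j - r`_k).
Proof.
move=> fr; rewrite [LHS](big_nth 0) [X in _ * X * _](big_nth 0) !big_mkord.
have split_diag (j : 'I_(size r)) : f.[a * r`_j] = lead_coef f * ((a - 1) * r`_j)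
     * \prod_(k < size r | k != j) (a * r`_j - r`_k).
  rewrite (horner_splits _ fr) (big_nth 0) big_mkord (bigD1 j) //= mulrA.
  by congr (_ * _ * _); ring.
by rewrite (eq_bigr _ (fun j _ => split_diag j)) !big_split /= !prodr_const !card_ord !mulrA.
Qed.

Local Open Scope complex_scope.

Section RealComplex.
Variable R : rcfType.
Implicit Types x y : R.

Lemma real_complexD x y : (x + y)%:C = x%:C + y%:C :> R[i]. Proof. exact: rmorphD. Qed.
Lemma real_complexB x y : (x - y)%:C = x%:C - y%:C :> R[i]. Proof. exact: rmorphB. Qed.
Lemma real_complexN x : (- x)%:C = - x%:C :> R[i]. Proof. exact: rmorphN. Qed.
Lemma real_complexM x y : (x * y)%:C = x%:C * y%:C :> R[i]. Proof. exact: rmorphM. Qed.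
Lemma real_complexV x : (x^-1)%:C = x%:C^-1 :> R[i]. Proof. exact: fmorphV. Qed.
Lemma real_complexX x n : (x ^+ n)%:C = x%:C ^+ n :> R[i]. Proof. exact: rmorphXn. Qed.
Lemma real_complex1 : 1%:C = 1 :> R[i]. Proof. exact: rmorph1. Qed.

Definition real_complexE :=
  (real_complexD, real_complexB, real_complexN, real_complexM, real_complexV,
   real_complexX, real_complex1).
End RealComplex.

Lemma qdisc_roots_pairs (R : rcfType) (q : R) (g : R[i]) (r : seq R[i]) :
  0 < q ->
  qdisc_roots g r q
  = g ^ ((2 * size r)%:Z - 2) * (-1) ^+ (size r * (size r - 1))./2
    * \prod_(j < size r) \prod_(k < size r | k != j) (q%:C * r`_j - r`_k).
Proof.
move=> q_gt0; rewrite /qdisc_roots /=.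
set S := (Num.sqrt q)%:C; set n := size r; set N := (n * (n - 1))./2.
have SS : S * S = q%:C by rewrite -rmorphM -expr2 sqr_sqrtr ?ltW.
have S_neq0 : S != 0 by rewrite (inj_eq (@complexI R)) sqrtr_eq0 -ltNge.
have factor (j k : 'I_n) : (S * r`_j - S^-1 * r`_k) * (S^-1 * r`_j - S * r`_k)
    = - (q%:C)^-1 * ((q%:C * r`_j - r`_k) * (q%:C * r`_k - r`_j)).
  by rewrite -SS; field.
under eq_bigr do under eq_bigr do rewrite factor.
rewrite (eq_bigr _ (fun j _ => big_split _ _ _ _ _)) big_split /= prod_pairs_const.
rewrite prod_pairs_sym -/N mulrA rmorphXn -[_ * q%:C ^+ N * _]mulrA -exprMn.
by rewrite mulrN mulfV ?mulN1r // -SS mulf_neq0.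
Qed.

Section RogersSzego.
Variables (R : rcfType) (q : R).
Hypotheses (q_gt0 : 0 < q) (q_lt1 : q < 1).
Local Notation P := (qpoch q q).
Local Notation s := (Num.sqrt q).
Local Notation H n := (rogers_szego n q).

Let s_neq0 : s != 0. Proof. by rewrite sqrtr_eq0 -ltNge. Qed.

Lemma qpoch0 : P 0 = 1. Proof. by rewrite /qpoch big_ord0. Qed.

Lemma qpochS n : P n.+1 = P n * (1 - q ^+ n.+1).
Proof. by rewrite /qpoch big_ord_recr /= exprS. Qed.

Lemma subr1qX_gt0 n : (0 < n)%N -> 0 < 1 - q ^+ n.
Proof. by move=> n_gt0; rewrite subr_gt0 exprn_ilt1 ?ltW // -lt0n. Qed.

Lemma qpoch_gt0 n : 0 < P n.
Proof.
by elim: n => [|n IH]; rewrite ?qpoch0 // qpochS mulr_gt0 ?subr1qX_gt0.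
Qed.

Let qpoch_neq0 n : P n != 0. Proof. by rewrite gt_eqF ?qpoch_gt0. Qed.
Let subr1qX_neq0 n : 1 - q ^+ n.+1 != 0. Proof. by rewrite gt_eqF ?subr1qX_gt0. Qed.

Definition qbinom n k := P n / (P k * P (n - k)).

Lemma qbinomnn n : qbinom n n = 1.
Proof. by rewrite /qbinom subnn qpoch0 mulr1 divff. Qed.

Lemma qbinom_pascal n k : (k < n)%N ->
  qbinom n.+1 k.+1 = qbinom n k + q ^+ k.+1 * qbinom n k.+1.
Proof.
move=> lt_kn; rewrite /qbinom subSS.
have [m ->] : exists m, n = (k + m).+1 by exists (n - k.+1)%N; lia.
rewrite (_ : (k + m).+1 - k = m.+1)%N; last lia.
rewrite (_ : (k + m).+1 - k.+1 = m)%N; last lia.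
rewrite !qpochS (_ : (k + m).+2 = k.+1 + m.+1)%N ?exprD; last lia.
have := subr1qX_neq0 k; have := subr1qX_neq0 m.
set x := q ^+ k.+1; set y := q ^+ m.+1 => y1 x1.
by field; rewrite !qpoch_neq0 x1 y1.
Qed.

Lemma qbinom_absorb n k : (k <= n)%N ->
  qbinom n.+1 k.+1 * (1 - q ^+ k.+1) = (1 - q ^+ n.+1) * qbinom n k.
Proof.
by move=> le_kn; rewrite /qbinom subSS !qpochS; field; rewrite !qpoch_neq0 subr1qX_neq0.
Qed.

(* Coefficient of [z^k] in [H_n(z|q)], extended by [0] beyond [k = n] so that the
   Pascal recurrence holds for every [k]. *)
Definition rs_coef n k := if (k <= n)%N then qbinom n k * s ^- k else 0.

Lemma rs_coef0 n : rs_coef n 0 = 1.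
Proof. by rewrite /rs_coef /qbinom subn0 qpoch0 mul1r divff // invr1 mulr1. Qed.

Lemma rs_coefnn n : rs_coef n n = s ^- n.
Proof. by rewrite /rs_coef leqnn qbinomnn mul1r. Qed.

Lemma rs_coefS n k :
  rs_coef n.+1 k.+1 = s^-1 * rs_coef n k + q ^+ k.+1 * rs_coef n k.+1.
Proof.
rewrite /rs_coef ltnS exprSr invfM; case: (ltngtP k n) => [lt_kn|lt_nk|->].
- by rewrite qbinom_pascal //; ring.
- by rewrite !mulr0 addr0.
- by rewrite !qbinomnn mulr0 addr0; ring.
Qed.

Lemma rs_coef_absorb n k :
  rs_coef n.+1 k.+1 * (1 - q ^+ k.+1) = (1 - q ^+ n.+1) / s * rs_coef n k.
Proof.
rewrite /rs_coef ltnS; case: leqP => [le_kn|]; last by rewrite mul0r mulr0.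
by rewrite mulrAC qbinom_absorb // (exprSr s) invfM; ring.
Qed.

Lemma rogers_szego_poly n : H n = \poly_(k < n.+1) (rs_coef n k)%:C.
Proof.
by rewrite poly_def; apply: eq_bigr => k _; rewrite /rs_coef -ltnS ltn_ord.
Qed.

Lemma horner_rogers_szego n x :
  (H n).[x] = \sum_(k < n.+1) (rs_coef n k)%:C * x ^+ k.
Proof. by rewrite rogers_szego_poly horner_poly. Qed.

Let rs_coefnn_neq0 n : (rs_coef n n)%:C != 0 :> R[i].
Proof. by rewrite rs_coefnn (inj_eq (@complexI R)) invr_eq0 expf_neq0. Qed.

Lemma lead_coef_rogers_szego n : lead_coef (H n) = (s ^- n)%:C.
Proof. by rewrite rogers_szego_poly lead_coef_poly // rs_coefnn. Qed.

Lemma size_rogers_szego n : size (H n) = n.+1.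
Proof. by rewrite rogers_szego_poly size_poly_eq. Qed.

Lemma rogers_szego_recr n z :
  (H n.+1).[z] = (s^-1)%:C * z * (H n).[z] + (H n).[q%:C * z].
Proof.
have padded x : (H n).[x] = \sum_(k < n.+2) (rs_coef n k)%:C * x ^+ k.
  by rewrite big_ord_recr /= {2}/rs_coef ltnn rmorph0 mul0r addr0 horner_rogers_szego.
rewrite horner_rogers_szego (horner_rogers_szego n) padded.
rewrite big_ord_recl [X in _ = _ + X]big_ord_recl !rs_coef0.
rewrite mulr_sumr addrCA -big_split /=; congr (_ + _); apply: eq_bigr => k _.
by rewrite /bump /= add1n rs_coefS !real_complexE exprMn !exprS; ring.
Qed.

Lemma rogers_szego_qdiff n z :
  (H n.+1).[z] - (H n.+1).[q%:C * z] = ((1 - q ^+ n.+1) / s)%:C * z * (H n).[z].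
Proof.
rewrite !horner_rogers_szego -sumrB big_ord_recl /= !expr0 subrr add0r mulr_sumr.
apply: eq_bigr => k _; rewrite /bump /= add1n.
transitivity ((rs_coef n.+1 k.+1 * (1 - q ^+ k.+1))%:C * z ^+ k.+1).
  by rewrite !real_complexE exprMn; ring.
by rewrite rs_coef_absorb !real_complexE (exprS z); ring.
Qed.

Lemma horner0_rogers_szego n : (H n).[0] = 1.
Proof.
rewrite horner_rogers_szego big_ord_recl big1 => [|k _]; last by rewrite expr0n mulr0.
by rewrite rs_coef0 real_complex1 mulr1 addr0.
Qed.

Lemma rogers_szego_neq0 n : H n != 0.
Proof. by rewrite -size_poly_gt0 size_rogers_szego. Qed.

Lemma size_rs_roots n r : splits_as (H n) r -> size r = n.
Proof. by move=> /(size_splits (rogers_szego_neq0 n)); rewrite size_rogers_szego. Qed.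

Lemma prod_rs_roots n r : splits_as (H n) r -> \prod_(z <- r) z = ((- s) ^+ n)%:C.
Proof.
move=> hr; have := splits_horner0 hr.
rewrite horner0_rogers_szego lead_coef_rogers_szego (size_rs_roots hr).
have signE : (-1) ^+ n = ((-1) ^+ n)%:C :> R[i].
  by rewrite real_complexX real_complexN real_complex1.
rewrite signE -real_complexM => /esym /(canRL (mulKf _)) ->; last first.
  by rewrite (inj_eq (@complexI R)) mulf_neq0 ?signr_eq0 // invr_eq0 expf_neq0.
by rewrite mulr1 -real_complexV invfM invrK invr_sign [(- s) ^+ _]exprNn mulrC.
Qed.

Lemma prod_rs_qroots_succ n r : splits_as (H n.+1) r ->
  \prod_(z <- r) (H n.+1).[q%:C * z]
  = ((1 - q ^+ n.+1) ^+ n.+1)%:C * \prod_(z <- r) (H n).[z].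
Proof.
move=> hr; set c := (1 - q ^+ n.+1) / s.
rewrite (eq_big_seq (fun z => - c%:C * (z * (H n).[z]))) => [|z zr].
  rewrite prodrMl_seq big_split /= (size_rs_roots hr) (prod_rs_roots hr) mulrA.
  by rewrite -real_complexN -!real_complexX -real_complexM -exprMn mulrNN divfK.
have := rogers_szego_qdiff n z; rewrite (root_splits hr zr) sub0r => /(canRL (@opprK _)).
by move->; rewrite mulNr mulrA.
Qed.

(* Closed form of the resultant [\prod_(z : H_(n+1)(z) = 0) H_n(z)]. *)
Definition rs_res n := P n ^+ n * \prod_(1 <= j < n) (P j)^-1.

Lemma rs_resS n : rs_res n.+1 = (1 - q ^+ n.+1) ^+ n.+1 * rs_res n.
Proof.
case: n => [|n]; first by rewrite /rs_res !big_geq // qpochS qpoch0 !mulr1 mul1r.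
rewrite /rs_res big_nat_recr //= qpochS exprMn.
set W := \prod_(_ <= _ < _) _; set a := 1 - _; rewrite !(exprS (P n.+1)).
by field; rewrite qpoch_neq0.
Qed.

Lemma prod_rs_at_roots_succ n r : splits_as (H n.+1) r ->
  \prod_(z <- r) (H n).[z] = (rs_res n)%:C.
Proof.
elim: n r => [|n IH] r hr.
  rewrite /rs_res big_geq // qpoch0 expr0 mulr1 real_complex1.
  by rewrite big1 // => z _; rewrite horner_rogers_szego big_ord1 rs_coef0 real_complex1 mulr1.
have [r0 hr0] := closed_field_poly_normal (H n.+1).
have := prod_horner_splitsC hr0 hr.
rewrite !lead_coef_rogers_szego (size_rs_roots hr0) (size_rs_roots hr).
have lead_eq : (s ^- n.+1) ^+ n.+2 = (s ^- n.+2) ^+ n.+1.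
  by rewrite -!exprVn -!exprM mulnC.
rewrite -signr_odd oddM andbN expr0 mul1r -!real_complexX lead_eq => /mulfI <-; last first.
  by rewrite (inj_eq (@complexI R)) expf_neq0 // invr_eq0 expf_neq0.
under eq_big_seq => z zr do rewrite rogers_szego_recr (root_splits hr0 zr) mulr0 add0r.
by rewrite prod_rs_qroots_succ // (IH _ hr0) rs_resS [RHS]real_complexM.
Qed.

Lemma prod_rs_at_qroots n r : splits_as (H n) r ->
  \prod_(z <- r) (H n).[q%:C * z] = (rs_res n)%:C.
Proof.
case: n => [|n] hr; last first.
  by rewrite prod_rs_qroots_succ // prod_rs_at_roots_succ // rs_resS [RHS]real_complexM.
have /size0nil -> := size_rs_roots hr.
by rewrite big_nil /rs_res big_geq // expr0 mulr1 real_complex1.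
Qed.

Lemma sqrtq_pairs n : s ^+ (n * (n - 1)) = q ^+ (n * (n - 1))./2.
Proof.
have even : ~~ odd (n * (n - 1)) by case: n => // n; rewrite oddM subn1 /= andNb.
by rewrite -[in RHS](sqr_sqrtr (ltW q_gt0)) -exprM mul2n even_halfK.
Qed.

Lemma rs_root_pairs n r : splits_as (H n) r ->
  \prod_(j < size r) \prod_(k < size r | k != j) (q%:C * r`_j - r`_k)
  = (q ^+ (n * (n - 1))./2 * rs_res n / (1 - q) ^+ n)%:C.
Proof.
move=> hr; have := prod_horner_splits_scale q%:C hr.
rewrite (prod_rs_at_qroots hr) (prod_rs_roots hr) lead_coef_rogers_szego (size_rs_roots hr).
rewrite -real_complex1 -real_complexB -!real_complexX -!real_complexM.
set N := (n * (n - 1))./2.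
have cofactorE : (s ^- n) ^+ n * (q - 1) ^+ n * (- s) ^+ n = (1 - q) ^+ n / q ^+ N.
  have snn : (s ^+ n) ^+ n = q ^+ N * s ^+ n.
    by rewrite -sqrtq_pairs -exprM -exprD; case: (n) => // m; rewrite subn1 /= mulnS addnC.
  rewrite -mulrA -exprMn mulrN -mulNr opprB exprVn snn exprMn.
  by field; rewrite !expf_neq0 // gt_eqF.
rewrite cofactorE => rs_resE.
have cofactor_neq0 : ((1 - q) ^+ n / q ^+ N)%:C != 0 :> R[i].
  by rewrite (inj_eq (@complexI R)) mulf_neq0 ?invr_eq0 ?expf_neq0 // gt_eqF ?subr_gt0.
apply: (mulfI cofactor_neq0); rewrite -rs_resE -real_complexM; congr (_%:C).
by field; rewrite !expf_neq0 // gt_eqF ?subr_gt0.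
Qed.

Lemma qdisc_rs_roots n (g : R[i]) r : splits_as (H n) r ->
  qdisc_roots g r q
  = g ^ ((2 * n)%:Z - 2) * ((- q) ^+ (n * (n - 1))./2 * rs_res n / (1 - q) ^+ n)%:C.
Proof.
move=> hr; rewrite qdisc_roots_pairs // (rs_root_pairs hr) (size_rs_roots hr) -mulrA.
rewrite [(- q) ^+ _]exprNn -!mulrA [in RHS]real_complexM.
by rewrite real_complexX real_complexN real_complex1.
Qed.

Lemma sqrtqX_double m :
  (s ^+ m.+1) ^+ (2 * m) = q ^+ (m.+1 * (m.+1 - 1))./2 ^+ 2.
Proof. by rewrite -exprM mulnCA mulnC exprM -sqrtq_pairs subn1. Qed.

Lemma qdisc_rogers_szego n :
  qdisc (H n) q
  = ((- q) ^- (n * (n - 1))./2 * (P n / (1 - q)) ^+ n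
     * \prod_(1 <= j < n) (P j)^-1)%:C.
Proof.
rewrite /qdisc; case: (closed_field_poly_normal _) => r hr /=.
rewrite (qdisc_rs_roots _ hr) lead_coef_rogers_szego -fmorphXz -real_complexM /rs_res.
congr (_%:C); case: n {r hr} => [|m].
  by rewrite !big_geq // !expr0 invr1 exp1rz !mul1r.
rewrite exprz_double_pred exprVn sqrtqX_double exprNn [in RHS]invfM invr_sign expr_div_n.
by field; rewrite !expf_neq0 // ?gt_eqF ?subr_gt0.
Qed.

Lemma qdisc_rs_phi n :
  qdisc (rs_phi n q) q
  = ((- q) ^+ (n * (n - 1))./2 / (1 - q) ^+ n * P n
     * \prod_(1 <= j < n) (P j)^-1)%:C.
Proof.
rewrite /qdisc; case: (closed_field_poly_normal _) => r hr /=.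
have sqrtP_neq0 : Num.sqrt (P n) != 0 by rewrite sqrtr_eq0 -ltNge qpoch_gt0.
set k := s ^+ n / Num.sqrt (P n).
have k_neq0 : k%:C != 0 :> R[i].
  by rewrite (inj_eq (@complexI R)) mulf_neq0 ?expf_neq0 ?invr_eq0.
have leadE : k * s ^- n = (Num.sqrt (P n))^-1 by rewrite mulrAC divff ?mul1r ?expf_neq0.
rewrite (qdisc_rs_roots _ (splits_as_scale k_neq0 hr)) /rs_phi lead_coefZ.
rewrite lead_coef_rogers_szego -real_complexM leadE -fmorphXz -real_complexM /rs_res.
congr (_%:C); case: n {r hr k k_neq0 leadE} sqrtP_neq0 => [_|m sqrtP_neq0].
  by rewrite !big_geq // qpoch0 sqrtr1 invr1 exp1rz !expr0 !mulr1.
rewrite exprz_double_pred exprVn exprM sqr_sqrtr ?ltW ?qpoch_gt0 // exprS.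
by field; rewrite !expf_neq0 // ?gt_eqF ?subr_gt0 ?qpoch_gt0.
Qed.

Lemma rs_phi_factorS n :
  s ^+ n.+1 / Num.sqrt (P n.+1) * ((1 - q ^+ n.+1) / s)
  = Num.sqrt (1 - q ^+ n.+1) * (s ^+ n / Num.sqrt (P n)).
Proof.
have b_ge0 : 0 <= 1 - q ^+ n.+1 by rewrite ltW ?subr1qX_gt0.
rewrite qpochS sqrtrM ?ltW ?qpoch_gt0 // -{2}(sqr_sqrtr b_ge0) exprS.
have sqrtP_neq0 : Num.sqrt (P n) != 0 by rewrite sqrtr_eq0 -ltNge qpoch_gt0.
have sqrtb_neq0 : Num.sqrt (1 - q ^+ n.+1) != 0.
  by rewrite sqrtr_eq0 -ltNge subr1qX_gt0.
by field; apply/and3P.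
Qed.

Lemma qderiv_rs_phi n z : (0 < n)%N -> z != 0 ->
  qderiv q (rs_phi n q) z
  = (Num.sqrt (1 - q ^+ n) / (1 - q))%:C * (rs_phi n.-1 q).[z].
Proof.
case: n => // n _ z_neq0.
have qdiffE : (rs_phi n.+1 q).[z] - (rs_phi n.+1 q).[q%:C * z]
              = (Num.sqrt (1 - q ^+ n.+1))%:C * z * (rs_phi n q).[z].
  rewrite /rs_phi !hornerZ -mulrBr rogers_szego_qdiff !mulrA -real_complexM.
  by rewrite rs_phi_factorS real_complexM; ring.
have subq_neq0 : 1 - q%:C != 0 :> R[i].
  by rewrite -real_complex1 -real_complexB (inj_eq (@complexI R)) gt_eqF ?subr_gt0.
rewrite /qderiv qdiffE (_ : z - q%:C * z = (1 - q%:C) * z); last by ring.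
rewrite real_complexM real_complexV real_complexB real_complex1 /=.
by field; rewrite z_neq0 andbT.
Qed.
End RogersSzego.

Theorem mainTheorem10 (R : rcfType) (q : R) (hq0 : 0 < q) (hq1 : q < 1) :
  (forall (n : nat) (z : R[i]), (0 < n)%N -> z != 0 ->
     qderiv q (rs_phi n q) z
     = ((Num.sqrt (1 - q ^+ n) / (1 - q))%:C) * (rs_phi n.-1 q).[z])
  /\
  (forall n : nat,
     qdisc (rs_phi n q) q
     = (((- q) ^+ (n * (n - 1))./2 / (1 - q) ^+ n * qpoch q q n
         * \prod_(1 <= j < n) (qpoch q q j)^-1)%:C))
  /\
  (forall n : nat,
     qdisc (rogers_szego n q) q
     = (((- q) ^- (n * (n - 1))./2 * (qpoch q q n / (1 - q)) ^+ n
         * \prod_(1 <= j < n) (qpoch q q j)^-1)%:C)).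
Proof.
split; first exact: qderiv_rs_phi.
by split; [exact: qdisc_rs_phi | exact: qdisc_rogers_szego].
Qed.
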